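(* Let $a\in\mathbb{O}$ with $a^2=\pm1$. Then the map $\Phi:{}^*\mathbb{O}(a,1)\to\mathbb{O}_{T_{a,\bar a}\circ\sigma_{\mathbb{O}}}$, $x\mapsto \bar a x$, is an isomorphism of algebras. Consequently, if $a^2=-1$, then $\mathbb{O}_{T_{a,\bar a}\circ\sigma_{\mathbb{O}}}$ is isomorphic to ${}^*\mathbb{O}(i,1)$.
   Context: $\mathbb{O}$ is the real octonion algebra, $\sigma_{\mathbb{O}}(x)=\bar x$ its conjugation, $i\in\mathbb{O}$ a fixed element with $i^2=-1$, and $T_{a,\bar a}(x)=ax\bar a$ (well defined by alternativity). For a linear map $f$ of $\mathbb{O}$, $\mathbb{O}_f$ is $\mathbb{O}$ with product $x* y=f(x)y$. For norm-one $a$, ${}^*\mathbb{O}(a,1)$ is $\mathbb{O}$ with product $x\odot y=(\bar x a)y$. *)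

(* Real octonions built by the Cayley-Dickson construction
   R -> C -> H -> O over a real number field R. *)
From HB Require Import structures.
From mathcomp Require Import all_boot all_order all_algebra.
From mathcomp Require Import reals.
Set Implicit Arguments. Unset Strict Implicit. Unset Printing Implicit Defensive.
Import Order.TTheory GRing.Theory Num.Theory.
Local Open Scope ring_scope.

(* Generic Cayley-Dickson doubling of a *-algebra T (with scalars R).
   (a,b)(c,d) = (ac - conj(d) b, da + b conj(c)),  conj(a,b) = (conj a, -b). *)
Record cd_ops (R T : Type) := CDOps {
  cd_zero : T; cd_one : T;
  cd_add : T -> T -> T; cd_opp : T -> T;
  cd_mul : T -> T -> T; cd_conj : T -> T;
  cd_scale : R -> T -> T }.

Definition cd_double (R T : Type) (o : cd_ops R T) : cd_ops R (T * T) :=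
  CDOps (cd_zero o, cd_zero o) (cd_one o, cd_zero o)
    (fun x y => (cd_add o x.1 y.1, cd_add o x.2 y.2))
    (fun x => (cd_opp o x.1, cd_opp o x.2))
    (fun x y => (cd_add o (cd_mul o x.1 y.1) (cd_opp o (cd_mul o (cd_conj o y.2) x.2)),
                 cd_add o (cd_mul o y.2 x.1) (cd_mul o x.2 (cd_conj o y.1))))
    (fun x => (cd_conj o x.1, cd_opp o x.2))
    (fun r x => (cd_scale o r x.1, cd_scale o r x.2)).

Definition real_ops (R : comRingType) : cd_ops R R :=
  CDOps 0 1 +%R -%R *%R id *%R.

Definition oct (R : comRingType) : Type := ((R * R) * (R * R)) * ((R * R) * (R * R)).

Definition oct_ops (R : comRingType) : cd_ops R (oct R) :=
  cd_double (cd_double (cd_double (real_ops R))).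

Section OctOps.
Variable R : comRingType.
Definition oct0 : oct R := cd_zero (oct_ops R).
Definition oct1 : oct R := cd_one (oct_ops R).
Definition oadd : oct R -> oct R -> oct R := cd_add (oct_ops R).
Definition oopp : oct R -> oct R := cd_opp (oct_ops R).
Definition omul : oct R -> oct R -> oct R := cd_mul (oct_ops R).
Definition oconj : oct R -> oct R := cd_conj (oct_ops R).
Definition oscale : R -> oct R -> oct R := cd_scale (oct_ops R).

(* T_{a,abar}(x) = a x abar  (well defined by alternativity) *)
Definition T_aa (a : oct R) (x : oct R) : oct R := omul (omul a x) (oconj a).

Definition prod_f (f : oct R -> oct R) (x y : oct R) : oct R := omul (f x) y.

Definition prod_star (a : oct R) (x y : oct R) : oct R := omul (omul (oconj x) a) y.

Definition alg_iso (m1 m2 : oct R -> oct R -> oct R) (phi : oct R -> oct R) : Prop :=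
  [/\ (forall x y, phi (oadd x y) = oadd (phi x) (phi y)),
      (forall (r : R) x, phi (oscale r x) = oscale r (phi x)),
      bijective phi &
      (forall x y, phi (m1 x y) = m2 (phi x) (phi y))].
End OctOps.

(* If a^2 = 1 then a = +-1, and if a^2 = -1 then a is a purely imaginary unit
   octonion; in both cases abar = +-a, and the (Moufang-type) identity
   (a z)(abar y) = abar ((z a) y) together with a(z a)abar = a z turns
   Phi(x (.) y) = abar((xbar a) y) into (a (xbar a) abar)(abar y) = f(Phi x) Phi y.
   For the second part, the automorphism group of O acts transitively on the
   purely imaginary unit octonions: conjugating the two quaternion halves of
   a = (p, q) separately by unit quaternions brings it into the plane spanned
   by e1 and e4, an automorphism exchanging the two halves moves that plane
   into the quaternions, where one more conjugation reaches e1.  Automorphisms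
   commuting with conjugation carry *O(a,1) isomorphically onto *O(g a,1), so
   both O_{T_{a,abar} o sigma} and *O(i,1) are isomorphic to *O(e1,1). *)

From mathcomp Require Import all_boot all_order all_algebra.
From mathcomp Require Import reals.
From mathcomp Require Import ring lra.
Set Implicit Arguments. Unset Strict Implicit. Unset Printing Implicit Defensive.
Import Order.TTheory GRing.Theory Num.Theory.
Local Open Scope ring_scope.

Definition quat (R : comNzRingType) : Type := (R * R) * (R * R).

Section Quaternions.
Variable R : comNzRingType.
Implicit Types (r : R) (p q u v w : quat R).

Definition qops : cd_ops R (quat R) := cd_double (cd_double (real_ops R)).
Definition qmul : quat R -> quat R -> quat R := cd_mul qops.
Definition qconj : quat R -> quat R := cd_conj qops.
Definition qadd : quat R -> quat R -> quat R := cd_add qops.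
Definition qopp : quat R -> quat R := cd_opp qops.
Definition qscale : R -> quat R -> quat R := cd_scale qops.

Definition qnorm q : R := let: ((q0, q1), (q2, q3)) := q in
  q0 ^+ 2 + q1 ^+ 2 + q2 ^+ 2 + q3 ^+ 2.
Definition qreal r : quat R := ((r, 0), (0, 0)).
Definition qe1 r : quat R := ((0, r), (0, 0)).

Definition onorm (a : oct R) : R := qnorm a.1 + qnorm a.2.
Definition ore (a : oct R) : R := a.1.1.1.
Definition oe1 : oct R := (qe1 1, qreal 0).

End Quaternions.

Ltac qdest x := case: x => [[? ?] [? ?]].
Ltac odest x := case: x => [[[? ?] [? ?]] [[? ?] [? ?]]].
Ltac qring := rewrite /qmul /qconj /qadd /qopp /qscale /qnorm /qreal /qe1 /=;
  try congr ((_, _), (_, _)); ring.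
Ltac oring := rewrite /omul /oconj /oscale /oadd /oopp /oct1 /onorm /qnorm /=;
  try congr (((_, _), (_, _)), ((_, _), (_, _))); ring.

Section QuaternionIdentities.
Variable R : comNzRingType.
Implicit Types (r c : R) (p q u v w : quat R).

Lemma qconjK q : qconj (qconj q) = q.
Proof. qdest q; qring. Qed.

Lemma qscale1 q : qscale 1 q = q.
Proof. qdest q; qring. Qed.

Lemma qscaleA r c q : qscale r (qscale c q) = qscale (r * c) q.
Proof. qdest q; qring. Qed.

Lemma qnorm_conj q : qnorm (qconj q) = qnorm q.
Proof. qdest q; qring. Qed.

Lemma qnormM p q : qnorm (qmul p q) = qnorm p * qnorm q.
Proof. qdest p; qdest q; qring. Qed.

Lemma qnormZ c q : qnorm (qscale c q) = c ^+ 2 * qnorm q.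
Proof. qdest q; qring. Qed.

Lemma qmulZl c p q : qmul (qscale c p) q = qscale c (qmul p q).
Proof. qdest p; qdest q; qring. Qed.

Lemma qmul_rotZ c u w :
  qmul (qmul (qscale c u) w) (qconj (qscale c u)) =
  qscale (c ^+ 2) (qmul (qmul u w) (qconj u)).
Proof. qdest u; qdest w; qring. Qed.

Lemma qmul_conj_rot u q :
  qmul (qmul (qmul u (qconj q)) q) (qconj u) = qscale (qnorm q * qnorm u) (qreal 1).
Proof. qdest u; qdest q; qring. Qed.

Lemma qmul_rot0 u : qmul (qmul u (qreal 0)) (qconj u) = qreal 0.
Proof. qdest u; qring. Qed.

End QuaternionIdentities.

Section OctonionIdentities.
Variable R : comNzRingType.
Implicit Types (r c : R) (a x y z : oct R).

Lemma omulE (p q p' q' : quat R) :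
  omul (p, q) (p', q') = (qadd (qmul p p') (qopp (qmul (qconj q') q)),
                          qadd (qmul q' p) (qmul q (qconj p'))).
Proof. by []. Qed.

Lemma oconjK x : oconj (oconj x) = x.
Proof. odest x; oring. Qed.

Lemma oconjM x y : oconj (omul x y) = omul (oconj y) (oconj x).
Proof. odest x; odest y; oring. Qed.

Lemma oscale1 x : oscale 1 x = x.
Proof. odest x; oring. Qed.

Lemma omulDr a x y : omul a (oadd x y) = oadd (omul a x) (omul a y).
Proof. odest a; odest x; odest y; oring. Qed.

Lemma omulZr r a x : omul a (oscale r x) = oscale r (omul a x).
Proof. odest a; odest x; oring. Qed.

Lemma omulKV a x : omul a (omul (oconj a) x) = oscale (onorm a) x.
Proof. odest a; odest x; oring. Qed.

Lemma omulVK a x : omul (oconj a) (omul a x) = oscale (onorm a) x.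
Proof. odest a; odest x; oring. Qed.

Lemma omul_conj_sandwich a z :
  omul (omul a (omul z a)) (oconj a) = oscale (onorm a) (omul a z).
Proof. odest a; odest z; oring. Qed.

Definition conj_middle a : Prop :=
  forall z y, omul (omul a z) (omul (oconj a) y) = omul (oconj a) (omul (omul z a) y).

Lemma conj_middle_real r : conj_middle (oscale r (oct1 R)).
Proof. by move=> z y; odest z; odest y; oring. Qed.

Lemma conj_middle_pure a : ore a = 0 -> conj_middle a.
Proof. by odest a; rewrite /ore /= => -> z y; odest z; odest y; oring. Qed.

Lemma oopp_oct1 : oopp (oct1 R) = oscale (-1) (oct1 R).
Proof. oring. Qed.

Lemma omul_oscale_oct1 r :
  omul (oscale r (oct1 R)) (oscale r (oct1 R)) = oscale (r ^+ 2) (oct1 R).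
Proof. oring. Qed.

Lemma onorm_oscale_oct1 r : onorm (oscale r (oct1 R)) = r ^+ 2.
Proof. oring. Qed.

Lemma omul_pure_sqr a : ore a = 0 -> omul a a = oscale (- onorm a) (oct1 R).
Proof. by odest a; rewrite /ore /= => ->; oring. Qed.

Lemma oscale_oct1_inj : injective (fun c : R => oscale c (oct1 R)).
Proof. by move=> c d [e _]; rewrite -[c]mulr1 -[d]mulr1. Qed.

End OctonionIdentities.

Section SquareRootsOfUnity.
Variable R : realFieldType.
Implicit Types (r c : R) (a : oct R).

Lemma onorm_ge0 a : 0 <= onorm a.
Proof. by odest a; rewrite /onorm /qnorm !addr_ge0 ?sqr_ge0. Qed.

(* The imaginary components of a^2 are 2 (re a) (im a). *)
Lemma osqr_real_or_pure a c : omul a a = oscale c (oct1 R) ->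
  ore a = 0 \/ a = oscale (ore a) (oct1 R).
Proof.
case: a => [[[a0 a1] [a2 a3]] [[a4 a5] [a6 a7]]].
rewrite /omul /oscale /oct1 /ore /= => -[_ e1 e2 e3 e4 e5 e6 e7].
have [-> | a0n] := eqVneq a0 0; [by left | right].
have a0K b : a0 * b + a0 * b = 0 -> b = 0 by move=> e; apply: (mulfI a0n); lra.
have z1 : a1 = 0 by apply: a0K; lra.
have z2 : a2 = 0 by apply: a0K; lra.
have z3 : a3 = 0 by apply: a0K; lra.
have z4 : a4 = 0 by apply: a0K; lra.
have z5 : a5 = 0 by apply: a0K; lra.
have z6 : a6 = 0 by apply: a0K; lra.
have z7 : a7 = 0 by apply: a0K; lra.
by rewrite z1 z2 z3 z4 z5 z6 z7 mulr1 mulr0.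
Qed.

Lemma osqr1_real a : omul a a = oct1 R ->
  exists2 r, a = oscale r (oct1 R) & r ^+ 2 = 1.
Proof.
move=> ha; have ha1 : omul a a = oscale 1 (oct1 R) by rewrite oscale1.
case: (osqr_real_or_pure ha1) => [a_pure | a_real].
  move: ha1; rewrite omul_pure_sqr // => /oscale_oct1_inj.
  by have := onorm_ge0 a; lra.
exists (ore a) => //; apply: oscale_oct1_inj.
by rewrite -omul_oscale_oct1 -a_real.
Qed.

Lemma osqrN1_pure a : omul a a = oopp (oct1 R) -> ore a = 0 /\ onorm a = 1.
Proof.
rewrite oopp_oct1 => ha.
case: (osqr_real_or_pure ha) => [a_pure | a_real].
  by split=> //; move: ha; rewrite omul_pure_sqr // => /oscale_oct1_inj; lra.
move: ha; rewrite a_real omul_oscale_oct1 => /oscale_oct1_inj.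
by have := sqr_ge0 (ore a); lra.
Qed.

End SquareRootsOfUnity.

Lemma conj_mul_alg_iso (R : comNzRingType) (a : oct R) :
  onorm a = 1 -> conj_middle a ->
  alg_iso (prod_star a) (prod_f (fun x => T_aa a (oconj x))) (omul (oconj a)).
Proof.
move=> a_unit a_mid; split.
- exact: omulDr.
- by move=> r x; apply: omulZr.
- by exists (omul a) => x; rewrite (omulVK, omulKV) a_unit oscale1.
- move=> x y; rewrite /prod_star /prod_f /T_aa oconjM oconjK.
  by rewrite omul_conj_sandwich a_unit oscale1 a_mid.
Qed.

Lemma sqr_pm1_conj_mul_alg_iso (R : realFieldType) (a : oct R) :
  omul a a = oct1 R \/ omul a a = oopp (oct1 R) ->
  alg_iso (prod_star a) (prod_f (fun x => T_aa a (oconj x))) (omul (oconj a)).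
Proof.
case=> [/osqr1_real [r -> r_sqr] | /osqrN1_pure [a_pure a_unit]].
- have r_unit : onorm (oscale r (oct1 R)) = 1 by rewrite onorm_oscale_oct1.
  exact: conj_mul_alg_iso r_unit (conj_middle_real r).
- exact: conj_mul_alg_iso a_unit (conj_middle_pure a_pure).
Qed.

Section Isomorphisms.
Variable R : comNzRingType.
Implicit Types (m : oct R -> oct R -> oct R) (f g : oct R -> oct R).

Lemma alg_iso_comp m1 m2 m3 f g :
  alg_iso m1 m2 f -> alg_iso m2 m3 g -> alg_iso m1 m3 (g \o f).
Proof.
case=> fD fZ f_bij fM [gD gZ g_bij gM]; split.
- by move=> x y; rewrite /= fD gD.
- by move=> r x; rewrite /= fZ gZ.
- exact: bij_comp.
- by move=> x y; rewrite /= fM gM.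
Qed.

Lemma alg_iso_sym m1 m2 f : alg_iso m1 m2 f -> exists g, alg_iso m2 m1 g.
Proof.
case=> fD fZ [g fK gK] fM; exists g; split.
- by move=> x y; apply: (can_inj fK); rewrite fD !gK.
- by move=> r x; apply: (can_inj fK); rewrite fZ !gK.
- by exists f.
- by move=> x y; apply: (can_inj fK); rewrite fM !gK.
Qed.

Definition oaut g := alg_iso (@omul R) (@omul R) g /\ forall x, g (oconj x) = oconj (g x).

Lemma oaut_comp f g : oaut f -> oaut g -> oaut (g \o f).
Proof.
case=> f_iso fC [g_iso gC]; split; first exact: alg_iso_comp f_iso g_iso.
by move=> x; rewrite /= fC gC.
Qed.

Lemma oaut_alg_iso_star g a : oaut g -> alg_iso (prod_star a) (prod_star (g a)) g.
Proof.
case=> -[gD gZ g_bij gM] gC; split=> [||| x y]; [exact: gD | exact: gZ | exact: g_bij |].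
by rewrite /prod_star !gM gC.
Qed.

End Isomorphisms.

Section Automorphisms.
Variable R : comNzRingType.
Implicit Types (u v p q : quat R) (x y : oct R).

Definition orot u v x : oct R :=
  (qmul (qmul u x.1) (qconj u), qmul (qmul v x.2) (qconj u)).

Definition oflip x : oct R :=
  let: (((x0, x1), (x2, x3)), ((x4, x5), (x6, x7))) := x in
  (((x0, x1), (x4, x5)), ((x2, x3), (- x6, - x7))).

Lemma orotE u v p q :
  orot u v (p, q) = (qmul (qmul u p) (qconj u), qmul (qmul v q) (qconj u)).
Proof. by []. Qed.

Lemma oflip_e1_real r c : oflip (qe1 r, qreal c) = (((0, r), (c, 0)), qreal 0).
Proof. by rewrite /oflip /qe1 /qreal /= oppr0. Qed.

Ltac aring := rewrite /orot /oflip /omul /oconj /oscale /oadd /oopp /qmul /qconj /=;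
  congr (((_, _), (_, _)), ((_, _), (_, _))); ring.

Lemma orot_mul_fst u v p q p' q' :
  qadd (qmul (qmul (qmul u p) (qconj u)) (qmul (qmul u p') (qconj u)))
       (qopp (qmul (qconj (qmul (qmul v q') (qconj u))) (qmul (qmul v q) (qconj u))))
  = qmul (qmul u (qadd (qscale (qnorm u) (qmul p p'))
                       (qopp (qscale (qnorm v) (qmul (qconj q') q))))) (qconj u).
Proof. qdest u; qdest v; qdest p; qdest q; qdest p'; qdest q'; qring. Qed.

Lemma orot_mul_snd u v p q p' q' :
  qadd (qmul (qmul (qmul v q') (qconj u)) (qmul (qmul u p) (qconj u)))
       (qmul (qmul (qmul v q) (qconj u)) (qconj (qmul (qmul u p') (qconj u))))
  = qmul (qmul v (qadd (qscale (qnorm u) (qmul q' p))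
                       (qscale (qnorm u) (qmul q (qconj p'))))) (qconj u).
Proof. qdest u; qdest v; qdest p; qdest q; qdest p'; qdest q'; qring. Qed.

Lemma orot_conj_orot u v x :
  orot (qconj u) (qconj v) (orot u v x) =
  (qscale (qnorm u ^+ 2) x.1, qscale (qnorm v * qnorm u) x.2).
Proof.
case: x => p q; qdest u; qdest v; qdest p; qdest q; rewrite /orot /=.
by congr (_, _); qring.
Qed.

Lemma orotK u v : qnorm u = 1 -> qnorm v = 1 ->
  cancel (orot u v) (orot (qconj u) (qconj v)).
Proof.
by move=> nu nv [p q]; rewrite orot_conj_orot nu nv expr1n mulr1 !qscale1.
Qed.

Lemma orotD u v x y : orot u v (oadd x y) = oadd (orot u v x) (orot u v y).
Proof. by qdest u; qdest v; odest x; odest y; aring. Qed.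

Lemma orotZ u v r x : orot u v (oscale r x) = oscale r (orot u v x).
Proof. by qdest u; qdest v; odest x; aring. Qed.

Lemma orot_conj u v x : orot u v (oconj x) = oconj (orot u v x).
Proof. by qdest u; qdest v; odest x; aring. Qed.

Lemma orot_aut u v : qnorm u = 1 -> qnorm v = 1 -> oaut (orot u v).
Proof.
move=> nu nv; split; last exact: orot_conj.
split.
- exact: orotD.
- exact: orotZ.
- exists (orot (qconj u) (qconj v)); first exact: orotK.
  by have := orotK (u := qconj u) (v := qconj v); rewrite !qconjK !qnorm_conj; apply.
- move=> [p q] [p' q']; rewrite omulE /orot /= omulE.
  by rewrite orot_mul_fst orot_mul_snd nu nv !qscale1.
Qed.

Lemma oflip_aut : oaut oflip.
Proof.
split; last by move=> x; odest x; aring.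
split.
- by move=> x y; odest x; odest y; aring.
- by move=> r x; odest x; aring.
- by exists oflip => x; odest x; rewrite /oflip /= !opprK.
- by move=> x y; odest x; odest y; aring.
Qed.

End Automorphisms.

Section Transitivity.
Variable R : rcfType.
Implicit Types (s w : R) (u q : quat R).

Lemma inv_sqrt_sqr_mul (n : R) : 0 < n -> (1 / Num.sqrt n) ^+ 2 * n = 1.
Proof.
move=> n_gt0; rewrite expr_div_n expr1n sqr_sqrtr ?ltW // mul1r mulVf //.
by rewrite gt_eqF.
Qed.

Lemma inv_sqrt_mul (n : R) : 0 < n -> 1 / Num.sqrt n * n = Num.sqrt n.
Proof.
move=> n_gt0; rewrite -{2}(sqr_sqrtr (ltW n_gt0)) expr2 mulrA div1r mulVf ?mul1r //.
by rewrite gt_eqF // sqrtr_gt0.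
Qed.

(* m = |w| - e1 w is, up to normalisation, the half-angle quaternion rotating w
   onto |w| e1; it degenerates exactly when w is a nonpositive multiple of e1. *)
Lemma qrot_half_angle s w1 w2 w3 : s ^+ 2 = w1 ^+ 2 + w2 ^+ 2 + w3 ^+ 2 ->
  let m : quat R := ((s + w1, 0), (w3, - w2)) in
  qmul (qmul m ((0, w1), (w2, w3))) (qconj m) = qscale (qnorm m * s) (qe1 1).
Proof.
move=> hs m.
have h1 : s ^+ 2 * w1 = (w1 ^+ 2 + w2 ^+ 2 + w3 ^+ 2) * w1 by rewrite hs.
have h2 : s ^+ 2 * w2 = (w1 ^+ 2 + w2 ^+ 2 + w3 ^+ 2) * w2 by rewrite hs.
have h3 : s ^+ 2 * w3 = (w1 ^+ 2 + w2 ^+ 2 + w3 ^+ 2) * w3 by rewrite hs.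
have h4 : s ^+ 2 * s = (w1 ^+ 2 + w2 ^+ 2 + w3 ^+ 2) * s by rewrite hs.
rewrite /m /qmul /qconj /qscale /qnorm /qe1 /=; congr ((_, _), (_, _)); lra.
Qed.

Lemma qrot_pure_to_e1 w1 w2 w3 : exists u, qnorm u = 1 /\
  qmul (qmul u ((0, w1), (w2, w3))) (qconj u) =
  qe1 (Num.sqrt (w1 ^+ 2 + w2 ^+ 2 + w3 ^+ 2)).
Proof.
set n := w1 ^+ 2 + w2 ^+ 2 + w3 ^+ 2; set s := Num.sqrt n.
have n_ge0 : 0 <= n by rewrite /n; nra.
have hs : s ^+ 2 = n by rewrite /s sqr_sqrtr.
have s_ge0 : 0 <= s by rewrite /s sqrtr_ge0.
have [sw1_0 | sw1_neq0] := eqVneq (s + w1) 0.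
  have z2 : w2 = 0 by move: hs; rewrite /n; nra.
  have z3 : w3 = 0 by move: hs; rewrite /n; nra.
  exists ((0, 0), (1, 0)); split; first by qring.
  by rewrite (_ : s = - w1) ?z2 ?z3; [qring | lra].
set m : quat R := ((s + w1, 0), (w3, - w2)).
have m_gt0 : 0 < qnorm m.
  have : 0 < (s + w1) ^+ 2 by rewrite lt0r sqrf_eq0 sw1_neq0 sqr_ge0.
  by rewrite /m /qnorm /=; nra.
exists (qscale (1 / Num.sqrt (qnorm m)) m); split.
  by rewrite qnormZ inv_sqrt_sqr_mul.
rewrite qmul_rotZ qrot_half_angle ?hs // qscaleA mulrA inv_sqrt_sqr_mul //.
by rewrite mul1r /qe1 /qscale /=; congr ((_, _), (_, _)); ring.
Qed.

Lemma qnorm_ge0 q : 0 <= qnorm q.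
Proof. by qdest q; rewrite /qnorm !addr_ge0 ?sqr_ge0. Qed.

Lemma qnorm_eq0 q : qnorm q = 0 -> q = qreal 0.
Proof.
by qdest q; rewrite /qnorm /qreal /= => hq; congr ((_, _), (_, _)); nra.
Qed.

Lemma qrot_to_real u q : qnorm u = 1 ->
  exists v, qnorm v = 1 /\ qmul (qmul v q) (qconj u) = qreal (Num.sqrt (qnorm q)).
Proof.
move=> nu; have [q0 | q_neq0] := eqVneq (qnorm q) 0.
  exists (qreal 1); split; first by qring.
  by rewrite q0 sqrtr0 (qnorm_eq0 q0); clear nu; qdest u; qring.
have q_gt0 : 0 < qnorm q by rewrite lt0r q_neq0 qnorm_ge0.
exists (qscale (1 / Num.sqrt (qnorm q)) (qmul u (qconj q))); split.
  by rewrite qnormZ qnormM qnorm_conj nu (mul1r (qnorm q)) inv_sqrt_sqr_mul.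
rewrite qmulZl qmulZl qmul_conj_rot nu mulr1 qscaleA inv_sqrt_mul //.
by rewrite /qreal /qscale /=; congr ((_, _), (_, _)); ring.
Qed.

Lemma oaut_pure_to_e1 (a : oct R) : ore a = 0 -> onorm a = 1 ->
  exists g, oaut g /\ g a = oe1 R.
Proof.
case: a => [[[a0 a1] [a2 a3]] q]; rewrite /ore /onorm /= => -> a_unit.
have [u1 [nu1 e1]] := qrot_pure_to_e1 a1 a2 a3.
have [v1 [nv1 e2]] := qrot_to_real q nu1.
set c := Num.sqrt _ in e1; set d := Num.sqrt _ in e2.
have [u2 [nu2 e3]] := qrot_pure_to_e1 c d 0.
have hc : c ^+ 2 = a1 ^+ 2 + a2 ^+ 2 + a3 ^+ 2 by rewrite /c sqr_sqrtr //; nra.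
have hd : d ^+ 2 = qnorm q by rewrite /d sqr_sqrtr // qnorm_ge0.
have cd : c ^+ 2 + d ^+ 2 + 0 ^+ 2 = 1 by move: a_unit; rewrite hc hd /qnorm /=; lra.
rewrite cd sqrtr1 in e3.
exists (orot u2 u2 \o @oflip R \o orot u1 v1); split.
  exact: oaut_comp (oaut_comp (orot_aut nu1 nv1) (@oflip_aut R)) (orot_aut nu2 nu2).
change (orot u2 u2 (oflip (orot u1 v1 (((0, a1), (a2, a3)), q))) = oe1 R).
by rewrite [orot u1 v1 _]orotE e1 e2 oflip_e1_real orotE e3 qmul_rot0.
Qed.

End Transitivity.

Theorem lemma13 (R : realType) (i : oct R) (hi : omul i i = oopp (oct1 R))
  (a : oct R) (ha : omul a a = oct1 R \/ omul a a = oopp (oct1 R)) :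
  alg_iso (prod_star a) (prod_f (fun x => T_aa a (oconj x)))
          (fun x => omul (oconj a) x)
  /\ (omul a a = oopp (oct1 R) ->
      exists psi : oct R -> oct R,
        alg_iso (prod_f (fun x => T_aa a (oconj x))) (prod_star i) psi).
Proof.
have phi_iso := sqr_pm1_conj_mul_alg_iso ha.
split=> [// | a_sqr].
have [phi_inv phi_inv_iso] := alg_iso_sym phi_iso.
have [a_pure a_unit] := osqrN1_pure a_sqr.
have [i_pure i_unit] := osqrN1_pure hi.
have [ga [ga_aut ga_e1]] := oaut_pure_to_e1 a_pure a_unit.
have [gi [gi_aut gi_e1]] := oaut_pure_to_e1 i_pure i_unit.
have a_iso := oaut_alg_iso_star a ga_aut; rewrite ga_e1 in a_iso.
have i_iso := oaut_alg_iso_star i gi_aut; rewrite gi_e1 in i_iso.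
have [gi_inv gi_inv_iso] := alg_iso_sym i_iso.
exists (gi_inv \o ga \o phi_inv).
exact: alg_iso_comp (alg_iso_comp phi_inv_iso a_iso) gi_inv_iso.
Qed.
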